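(* Assume Condition 1. For any $t\ge t_1$ and $\pi\in\Pi$, if $V_t(\pi)>\theta K$, then \[\Delta_{t-1}(\pi)\ge\sqrt{\frac{72\,V_t(\pi)\,C_{t-1}}{t-1}}.\]
   Context: Contextual bandit setting: $A$ a set of $K$ actions, $X$ contexts, $\Pi$ a finite set of $N$ policies, $D$ a distribution over $(x,\vec r)\in X\times[0,1]^K$ with marginal $D_X$; $(x_t,\vec r_t)\sim D$ i.i.d., the learner observes $x_t$, picks $a_t$, sees only $r_t:=r_t(a_t)$. $\eta_D(\pi)=\mathbb{E}[r(\pi(x))]$, $\pi^*$ a maximizer. $W_P(x,a)=\sum_{\pi:\pi(x)=a}P(\pi)$. With history $((x_i,a_i,r_i,p_i))_{i\le t}$, $\eta_t(W)=\frac1t\sum_i r_iW(x_i,a_i)/p_i$ for randomized policies $W$, $\pi_t=\arg\max_\pi\eta_t(\pi)$, $\Delta_t(W)=\eta_t(\pi_t)-\eta_t(W)$; $\mathbb{E}_{x\sim h_{t-1}}$ is the average over $x_1,\dots,x_{t-1}$. Actions are chosen by RandomizedUCB$(\Pi,\delta,K)$: $C_t=2\log(Nt/\delta)$, $\mu_t=\min\{\frac1{2K},\sqrt{C_t/(2Kt)}\}$; $P_t$ is a distribution over $\Pi$ whose objective $\sum_\pi P(\pi)\Delta_{t-1}(\pi)$ is within $\epsilon_{\mathrm{opt},t}=O(\sqrt{KC_t/t})$ of the optimum of minimizing it subject to: for all distributions $Q$ over $\Pi$, $\mathbb{E}_{\pi\sim Q}\mathbb{E}_{x\sim h_{t-1}}[1/((1-K\mu_t)W_P(x,\pi(x))+\mu_t)]\le\max\{4K,(t-1)\Delta_{t-1}(W_Q)^2/(180C_{t-1})\}$,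 with each constraint satisfied up to additive slack $K$; $W'_t(a)=(1-K\mu_t)W_{P_t}(x_t,a)+\mu_t$, $a_t\sim W'_t$, $p_t=W'_t(a_t)$. Constants: $\epsilon\in(0,1)$ fixed, $\rho=7500/\epsilon^3$, $\theta=(\rho+1)/(1-(1+\epsilon)/2)$. $t_0$ is the first $t$ with $\mu_t=\sqrt{C_t/(2Kt)}$; $t_1=\lceil16K\log(8KN/\delta)\rceil$. $V_t(\pi)=K$ for $t\le t_0$ and $V_t(\pi)=K+\mathbb{E}_{x\sim D_X}[1/((1-K\mu_t)W_{P_t}(x,\pi(x))+\mu_t)]$ for $t>t_0$; $\bar V_t(\pi)=\max_{\tau\le t}V_\tau(\pi)$. Condition 1: (i) for all $\pi\in\Pi$ and $t\ge t_1$, $\mathbb{E}_{x\sim D_X}[1/((1-K\mu_t)W_{P_t}(x,\pi(x))+\mu_t)]\le(1+\epsilon)\mathbb{E}_{x\sim h_{t-1}}[1/((1-K\mu_t)W_{P_t}(x,\pi(x))+\mu_t)]+\rho K$; and (ii) for all $\pi,\pi'\in\Pi$ and $t\ge t_0$, $|(\eta_t(\pi)-\eta_t(\pi'))-(\eta_D(\pi)-\eta_D(\pi'))|\le2\sqrt{(\bar V_t(\pi)+\bar V_t(\pi'))C_t/t}$. *)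

From HB Require Import structures.
From mathcomp Require Import all_boot all_order all_algebra.
From mathcomp Require Import all_classical all_reals all_analysis.
Set Implicit Arguments. Unset Strict Implicit. Unset Printing Implicit Defensive.
Import Order.TTheory GRing.Theory Num.Theory.
Import numFieldNormedType.Exports.
Local Open Scope classical_set_scope.
Local Open Scope ring_scope.

Section RUCB.
Variable R : realType.

(* The joint distribution D of (x, r)
   is a probability measure on an abstract sample space Omega, with
   ctx : Omega -> X the context and rew : Omega -> 'I_K -> R the reward
   vector; D_X is the law of ctx under D. *)
Variables (X : Type) (K : nat) (Pi : finType) (pol : Pi -> X -> 'I_K).
Variables (d : measure_display) (Omega : measurableType d)
          (D : probability Omega R) (ctx : Omega -> X) (rew : Omega -> 'I_K -> R).
Variable delta : R.

Definition Npol : nat := #|Pi|.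

Definition is_distr (P : {ffun Pi -> R}) : Prop :=
  (forall i, 0 <= P i) /\ \sum_i P i = 1.

Definition WP (P : {ffun Pi -> R}) (x : X) (a : 'I_K) : R :=
  \sum_(i | pol i x == a) P i.

(* deterministic policy as a randomized policy *)
Definition polW (i : Pi) (x : X) (a : 'I_K) : R := (pol i x == a)%:R.

Definition Ct (t : nat) : R := 2 * ln ((Npol)%:R * t%:R / delta).

Definition mu (t : nat) : R :=
  Num.min (1 / (2 * K%:R)) (Num.sqrt (Ct t / (2 * K%:R * t%:R))).

Definition Wprime (t : nat) (P : {ffun Pi -> R}) (x : X) (a : 'I_K) : R :=
  (1 - K%:R * mu t) * WP P x a + mu t.

Definition t1 : nat :=
  `|Num.ceil (16 * K%:R * ln (8 * K%:R * (Npol)%:R / delta))|%N.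

Definition EDX (f : X -> R) : R := Rintegral D setT (fun w => f (ctx w)).

Definition etaD (i : Pi) : R := Rintegral D setT (fun w => rew w (pol i (ctx w))).

(* xs t, rs t : the t-th sample (x_t, vec r_t), t >= 1;
   acts t : the chosen action a_t;  Ps t : the distribution P_t;
   pit t : the empirical best policy pi_t. *)
Variables (xs : nat -> X) (rs : nat -> 'I_K -> R) (acts : nat -> 'I_K)
          (Ps : nat -> {ffun Pi -> R}) (pit : nat -> Pi).

Definition pprob (t : nat) : R := Wprime t (Ps t) (xs t) (acts t).

Definition eta (t : nat) (W : X -> 'I_K -> R) : R :=
  (t%:R)^-1 * \sum_(1 <= i < t.+1) rs i (acts i) * W (xs i) (acts i) / pprob i.

Definition Delta (t : nat) (W : X -> 'I_K -> R) : R :=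
  eta t (polW (pit t)) - eta t W.

Definition Eh (t : nat) (f : X -> R) : R :=
  ((t.-1)%:R)^-1 * \sum_(1 <= i < t) f (xs i).

Definition constr_lhs (t : nat) (P Q : {ffun Pi -> R}) : R :=
  \sum_i Q i * Eh t (fun x => 1 / Wprime t P x (pol i x)).

Definition constr_rhs (t : nat) (Q : {ffun Pi -> R}) : R :=
  Num.max (4 * K%:R)
    ((t.-1)%:R * (Delta t.-1 (WP Q)) ^+ 2 / (180 * Ct t.-1)).

Definition objective (t : nat) (P : {ffun Pi -> R}) : R :=
  \sum_i P i * Delta t.-1 (polW i).

(* RandomizedUCB(Pi, delta, K) produced this run; copt is the constant
   hidden in eps_opt,t = O(sqrt(K C_t / t)). *)
Definition RUCB_run (copt : R) : Prop :=
  [/\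
      forall t a, 0 <= rs t a <= 1,
      forall t i, eta t (polW i) <= eta t (polW (pit t)),
      forall t, (1 <= t)%N ->
        is_distr (Ps t) /\
        forall Q, is_distr Q -> constr_lhs t (Ps t) Q <= constr_rhs t Q + K%:R,
      forall t, (1 <= t)%N -> forall P, is_distr P ->
        (forall Q, is_distr Q -> constr_lhs t P Q <= constr_rhs t Q) ->
        objective t (Ps t) <= objective t P + copt * Num.sqrt (K%:R * Ct t / t%:R)
    & (* a_t ~ W'_t was drawn, so p_t > 0 *)
      forall t, (1 <= t)%N -> 0 < pprob t].

Definition is_t0 (t0 : nat) : Prop :=
  [/\ (1 <= t0)%N,
      mu t0 = Num.sqrt (Ct t0 / (2 * K%:R * t0%:R)) &
      forall t, (1 <= t < t0)%N -> mu t <> Num.sqrt (Ct t / (2 * K%:R * t%:R))].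

Definition Vt (t0 : nat) (t : nat) (i : Pi) : R :=
  if (t <= t0)%N then K%:R
  else K%:R + EDX (fun x => 1 / Wprime t (Ps t) x (pol i x)).

Definition Vbar (t0 : nat) (t : nat) (i : Pi) : R :=
  \big[Num.max/Vt t0 1 i]_(1 <= tau < t.+1) Vt t0 tau i.

Definition rho (eps : R) : R := 7500 / eps ^+ 3.
Definition theta (eps : R) : R := (rho eps + 1) / (1 - (1 + eps) / 2).

Definition Condition1 (eps : R) (t0 : nat) : Prop :=
  (forall i t, (t1 <= t)%N ->
     EDX (fun x => 1 / Wprime t (Ps t) x (pol i x))
     <= (1 + eps) * Eh t (fun x => 1 / Wprime t (Ps t) x (pol i x)) + rho eps * K%:R)
  /\
  (forall i i' t, (t0 <= t)%N ->
     `|(eta t (polW i) - eta t (polW i')) - (etaD i - etaD i')|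
     <= 2 * Num.sqrt ((Vbar t0 t i + Vbar t0 t i') * Ct t / t%:R)).

End RUCB.

From HB Require Import structures.
From mathcomp Require Import all_boot all_order all_algebra.
From mathcomp Require Import all_classical all_reals all_analysis.
From mathcomp Require Import ring lra.
Set Implicit Arguments. Unset Strict Implicit. Unset Printing Implicit Defensive.
Import Order.TTheory GRing.Theory Num.Theory.
Import numFieldNormedType.Exports.
Local Open Scope classical_set_scope.
Local Open Scope ring_scope.

(* Test the constraint of the optimization problem on the point mass at pi:
   it bounds the empirical mean E_h[1/W'] by max(4K, (t-1) Delta^2/(180 C)) + K,
   and by Condition 1(i) the true mean V_t(pi) - K is at most (1+eps) times
   that plus rho K.  Since V_t(pi) > theta K, the branch 4K is impossible and
   the remaining branch leaves (t-1) Delta^2/(180 C) >= 2 V_t(pi)/5, which is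
   the claim because 180 * 2/5 = 72. *)

Section Constants.
Variable R : realType.
Implicit Types eps k V H A : R.

Lemma rho_ge eps : 0 < eps < 1 -> 7500 <= rho eps.
Proof.
case/andP=> e0 e1; have e3 : 0 < eps ^+ 3 by rewrite exprn_gt0.
have e31 : eps ^+ 3 <= 1 by rewrite exprn_ile1 // ltW.
by rewrite /rho ler_pdivlMr //; lra.
Qed.

Lemma theta_mul_subr eps : eps < 1 -> theta eps * (1 - eps) = 2 * (rho eps + 1).
Proof. by move=> e1; rewrite /theta; field; apply: lt0r_neq0; lra. Qed.

Lemma theta_gt1 eps : 0 < eps < 1 -> 1 < theta eps.
Proof.
move=> /[dup] /rho_ge r7 /andP[e0 e1].
have : 1 * (1 - eps) < theta eps * (1 - eps) by rewrite theta_mul_subr //; lra.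
by rewrite ltr_pM2r // subr_gt0.
Qed.

Lemma constraint_forces_gap eps k V H A : 0 < eps < 1 -> 0 < k ->
  theta eps * k < V ->
  V <= k + (1 + eps) * H + rho eps * k ->
  H <= Num.max (4 * k) A + k ->
  2 / 5 * V <= A.
Proof.
move=> /[dup] /rho_ge r7 /[dup] /andP[e0 e1] /andP[_ /theta_mul_subr thE] k0 HV.
set r := rho eps in r7 thE *; set th := theta eps in thE HV *.
have Vth : 2 * (r + 1) * k < V * (1 - eps).
  by rewrite -thE mulrAC ltr_pM2r //; lra.
have V0 : 0 < V by nra.
have e1' : 0 <= 1 + eps by lra.
move=> HE; rewrite -lerBlDr le_max => /orP[] /(ler_wpM2l e1') HH; first nra.
(* the only place where the size of rho matters: rho >= 4 suffices *)
have rho_big : (2 + eps + r) * (1 - eps) <= (r + 1) * (6 / 5 - 4 / 5 * eps) by nra.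
have small_k : (2 + eps + r) * k <= (3 / 5 - 2 / 5 * eps) * V.
  rewrite -(@ler_pM2r R (2 * (r + 1))); last by lra.
  have := ler_wpM2r (ltW V0) rho_big.
  have r0 : 0 <= 2 + eps + r by lra.
  have := ler_wpM2l r0 (ltW Vth).
  lra.
by rewrite -(@ler_pM2l R (1 + eps)); lra.
Qed.

Lemma sqrt_le_of_gap V C n D : 0 <= D -> 0 <= V -> 0 <= n ->
  2 / 5 * V <= n * D ^+ 2 / (180 * C) -> Num.sqrt (72 * V * C / n) <= D.
Proof.
move=> D0 V0 n0 HA; have [C0|C0] := lerP C 0.
  rewrite ler0_sqrtr // mulr_le0_ge0 ?invr_ge0 //.
  by rewrite mulr_ge0_le0 // mulr_ge0.
have [->|nz] := eqVneq n 0; first by rewrite invr0 mulr0 sqrtr0.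
have n0' : 0 < n by rewrite lt0r nz.
rewrite -(ger0_norm D0) -sqrtr_sqr ler_sqrt ?sqr_ge0 // ler_pdivrMr //.
by move: HA; rewrite ler_pdivlMr; nra.
Qed.

End Constants.

Section PointMass.
Variables (R : realType) (X : Type) (K : nat) (Pi : finType) (pol : Pi -> X -> 'I_K).
Variables (delta : R) (xs : nat -> X).

Definition point_distr (i : Pi) : {ffun Pi -> R} := [ffun j => (j == i)%:R].

Lemma is_distr_point i : is_distr (point_distr i).
Proof.
split=> [j|]; first by rewrite ffunE ler0n.
rewrite (bigD1 i) //= big1 ?addr0 ?ffunE ?eqxx // => j /negbTE ji.
by rewrite ffunE ji.
Qed.

Lemma WP_point i : WP pol (point_distr i) = polW R pol i.
Proof.
apply: funext => x; apply: funext => a; rewrite /WP /polW.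
have [<-|ia] := eqVneq (pol i x) a.
  rewrite (bigD1 i) //= ffunE eqxx big1 ?addr0 // => j /andP[_ /negbTE ji].
  by rewrite ffunE ji.
apply: big1 => j; rewrite ffunE; have [->|//] := eqVneq j i.
by rewrite (negbTE ia).
Qed.

Lemma constr_lhs_point t P i :
  constr_lhs pol delta xs t P (point_distr i) =
  Eh xs t (fun x => 1 / Wprime pol delta t P x (pol i x)).
Proof.
rewrite /constr_lhs (bigD1 i) //= big1 ?addr0 ?ffunE ?eqxx ?mul1r // => j /negbTE ji.
by rewrite ffunE ji mul0r.
Qed.

End PointMass.

Theorem lemma12 (R : realType) (X : Type) (K : nat) (Pi : finType)
  (pol : Pi -> X -> 'I_K)
  (d : measure_display) (Omega : measurableType d) (D : probability Omega R)
  (ctx : Omega -> X) (rew : Omega -> 'I_K -> R)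
  (delta eps copt : R) (t0 : nat)
  (xs : nat -> X) (rs : nat -> 'I_K -> R) (acts : nat -> 'I_K)
  (Ps : nat -> {ffun Pi -> R}) (pit : nat -> Pi) :
  (0 < K)%N -> (0 < #|Pi|)%N -> injective pol ->
  0 < delta < 1 -> 0 < eps < 1 ->
  (* measurability of the policies and rewards w.r.t. D *)
  (forall i a, measurable [set w | pol i (ctx w) = a]) ->
  (forall a, measurable_fun setT (fun w => rew w a)) ->
  (forall w a, 0 <= rew w a <= 1) ->
  RUCB_run pol delta xs rs acts Ps pit copt ->
  @is_t0 R K Pi delta t0 ->
  Condition1 pol D ctx rew delta xs rs acts Ps eps t0 ->
  forall (t : nat) (i : Pi), (@t1 R K Pi delta <= t)%N ->
    Vt pol D ctx delta Ps t0 t i > @theta R eps * K%:R ->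
    Delta pol delta xs rs acts Ps pit t.-1 (@polW R X K Pi pol i)
      >= Num.sqrt (72 * Vt pol D ctx delta Ps t0 t i * @Ct R Pi delta t.-1 / (t.-1)%:R).
Proof.
move=> K0 _ _ _ eps01 _ _ _ [_ pit_max constr _ _] [t0_ge1 _ _] [cond1i _] t i t1t HV.
have k0 : 0 < K%:R :> R by rewrite ltr0n.
have t0t : (t0 < t)%N.
  rewrite ltnNge; apply/negP => tt0; move: HV; rewrite /Vt tt0.
  by rewrite -[X in _ < X]mul1r ltr_pM2r // ltNge (ltW (theta_gt1 eps01)).
have VE : Vt pol D ctx delta Ps t0 t i =
          K%:R + EDX D ctx (fun x => 1 / Wprime pol delta t (Ps t) x (pol i x)).
  by rewrite /Vt leqNgt t0t.
have [_ /(_ _ (is_distr_point R i))] := constr t (leq_trans t0_ge1 (ltnW t0t)).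
rewrite constr_lhs_point /constr_rhs WP_point => Hconstr.
apply: sqrt_le_of_gap; rewrite ?ler0n //.
- by rewrite /Delta subr_ge0 pit_max.
- by apply: ltW; apply: le_lt_trans HV; rewrite mulr_ge0 // ltW // (lt_trans ltr01 (theta_gt1 eps01)).
apply: (constraint_forces_gap eps01 k0 HV _ Hconstr).
by rewrite VE -addrA lerD2l cond1i.
Qed.
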